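(* Let $n\ge2$ and $\mathbb{P}\in\mathcal{C}_n$. Then \[ R_n(\mathbb{P})=\sup_{x,y\in\mathbb{R}_{++}}\phi^{\mathbb{P}}(x,y). \]
   Context: Scheduling on two machines with $n$ tasks. A processing-time matrix is $T\in\mathbb{R}_{++}^{2\times n}$; an allocation is $X\in\{0,1\}^{2\times n}$ with $X_{1j}+X_{2j}=1$; makespan $M(X,T)=\max_{i\in\{1,2\}}\sum_jX_{ij}T_{ij}$; $M^*(T)=\min_XM(X,T)$. $\mathcal{P}_n$ is the set of Borel probability measures on $\mathbb{R}^n$ supported in $\mathbb{R}_{++}^n$. For $\mathbb{P}\in\mathcal{P}_n$, algorithm $\mathcal{A}^{\mathbb{P}}$ draws $\mathbf{z}\sim\mathbb{P}$ and sends task $j$ to machine 1 iff $T_{1j}/T_{2j}<z_j$ (else to machine 2); $M(\mathbb{P},T)$ is its expected makespan and $R_n(\mathbb{P})=\sup_{T\in\mathbb{R}_{++}^{2\times n}}M(\mathbb{P},T)/M^*(T)\in[1,\infty]$. $\mathcal{C}_n$ is the set of $\mathbb{P}\in\mathcal{P}_n$ invariant under permutations of coordinates. For $\mathbb{P}\in\mathcal{C}_n$ let $F_{\mathbb{P}}(x)=\mathbf{P}_{\mathbf{z}\sim\mathbb{P}}[z_1\le x]$ and $H_{\mathbb{P}}(x,y)=\mathbf{P}_{\mathbf{z}\sim\mathbb{P}}[z_1\le x,z_2\le y]$, and \[ \phi^{\mathbb{P}}(x,y)=1+y-\min\{1,1-\tfrac1x+y\}F_{\mathbb{P}}(x)-yF_{\mathbb{P}}(y)+\min\{1+\tfrac1x,1+y\}H_{\mathbb{P}}(x,y).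 \] *)

From HB Require Import structures.
From mathcomp Require Import all_boot all_order all_algebra all_fingroup.
From mathcomp Require Import all_classical all_reals all_analysis.
Set Implicit Arguments. Unset Strict Implicit. Unset Printing Implicit Defensive.
Import Order.TTheory GRing.Theory Num.Theory.
Local Open Scope classical_set_scope.
Local Open Scope ring_scope.

Section Sched.
Variable R : realType.

Definition m1 : 'I_2 := ord0.
Definition m2 : 'I_2 := ord_max.

Definition is_alloc n (X : 'M[R]_(2, n)) : Prop :=
  (forall i j, X i j = 0 \/ X i j = 1) /\ (forall j, X m1 j + X m2 j = 1).

Definition makespan n (X T : 'M[R]_(2, n)) : R :=
  Num.max (\sum_(j < n) X m1 j * T m1 j) (\sum_(j < n) X m2 j * T m2 j).

(* optimal makespan M*(T) = min over allocations (finite set, so inf = min) *)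
Definition opt_makespan n (T : 'M[R]_(2, n)) : R :=
  inf [set makespan X T | X in [set X | is_alloc X]].

Definition positive_matrix n (T : 'M[R]_(2, n)) : Prop :=
  forall i j, 0 < T i j.

Definition alg_alloc n (z : n.-tuple R) (T : 'M[R]_(2, n)) : 'M[R]_(2, n) :=
  \matrix_(i < 2, j < n)
    (if i == m1 then (if T m1 j / T m2 j < tnth z j then 1 else 0)
     else (if T m1 j / T m2 j < tnth z j then 0 else 1)).

Definition supported_pos n (P : probability (n.-tuple R) R) : Prop :=
  P [set z : n.-tuple R | forall j, 0 < tnth z j] = 1%E.

Definition perm_invariant n (P : probability (n.-tuple R) R) : Prop :=
  forall (s : 'S_n) (A : set (n.-tuple R)), measurable A ->
    P ((fun z : n.-tuple R => [tuple tnth z (s i) | i < n]) @^-1` A) = P A.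

Definition exp_makespan n (P : probability (n.-tuple R) R)
  (T : 'M[R]_(2, n)) : \bar R :=
  (\int[P]_z (makespan (alg_alloc z T) T)%:E)%E.

Definition approx_ratio n (P : probability (n.-tuple R) R) : \bar R :=
  ereal_sup [set (exp_makespan P T * ((opt_makespan T)^-1)%:E)%E
            | T in [set T : 'M[R]_(2, n) | positive_matrix T]].

(* F_P(x) = P[z_1 <= x],  H_P(x,y) = P[z_1 <= x, z_2 <= y]
   (z_1, z_2 are the coordinates of index 0 and 1; n >= 2 is assumed) *)
Definition cdfF n (P : probability (n.-tuple R) R) (x : R) : R :=
  fine (P [set z : n.-tuple R | nth 0 z 0 <= x]).

Definition cdfH n (P : probability (n.-tuple R) R) (x y : R) : R :=
  fine (P [set z : n.-tuple R | nth 0 z 0 <= x /\ nth 0 z 1 <= y]).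

Definition phiP n (P : probability (n.-tuple R) R) (x y : R) : R :=
  1 + y - Num.min 1 (1 - x^-1 + y) * cdfF P x - y * cdfF P y
    + Num.min (1 + x^-1) (1 + y) * cdfH P x y.

End Sched.

From HB Require Import structures.
From mathcomp Require Import all_boot all_order all_algebra all_fingroup.
From mathcomp Require Import all_classical all_reals all_analysis.
From mathcomp Require Import ring lra zify measurable_realfun.
Set Implicit Arguments. Unset Strict Implicit. Unset Printing Implicit Defensive.
Import Order.TTheory GRing.Theory Num.Theory.
Local Open Scope classical_set_scope.
Local Open Scope ring_scope.

(* For two tasks j <> k with processing times (1, 1/x) and (y, 1), the expected
   makespan of the algorithm is phi(x, y): by exchangeability of P it only involves
   the laws of z_j and of (z_j, z_k), i.e. F and H.  Padding such a pair with tasks of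
   total size d yields an instance whose optimum is at most 1 + d, which gives
   sup phi <= R_n(P).
   Conversely, fix an instance and an allocation X of makespan M, and let
   lam_j = share_m1 j and mu_j = share_m2 j be the fractions of M that X spends on
   task j on machines 1 and 2.  Each load of
   the algorithm is a sum over tasks of terms lam_j p_j + mu_j q_j, and this sum is
   redistributed over pairs of tasks: weight lam_j mu_k on (j, k), and the remaining
   weights lam_j (1 - sum mu), mu_k (1 - sum lam) on (j, s j), (s k, k) for a fixed
   s j <> j.  Since p_j + q_k is at most the makespan of the pair (j, k), the
   algorithm's makespan is pointwise at most M times a combination, of total weight
   at most 1, of two-task makespans.  Taking expectations bounds its expected
   makespan by M sup phi, whence R_n(P) <= sup phi. *)

Lemma le_ereal_sup_real_ubound (R : realType) (S : set (\bar R)) (x : \bar R) (r : R) :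
  S r%:E -> (forall s : R, ubound S s%:E -> (x <= s%:E)%E) -> (x <= ereal_sup S)%E.
Proof.
move=> Sr x_le; case Esup: (ereal_sup S) => [s| |].
- by apply: x_le => y Sy; rewrite -Esup; apply: ereal_sup_ubound.
- exact: leey.
- by have := ereal_sup_ubound Sr; rewrite Esup.
Qed.

Lemma subr_le_div_1D (R : realFieldType) (a e : R) : 0 <= a -> 0 < e ->
  a - e <= a / (1 + e / (a + 1)).
Proof.
move=> a_ge0 e_gt0; have a1_gt0 : 0 < a + 1 by rewrite ltr_wpDl.
have den_gt0 : 0 < 1 + e / (a + 1) by rewrite addr_gt0 ?divr_gt0.
rewrite ler_pdivlMr //.
have -> : (a - e) * (1 + e / (a + 1)) = a - e * (1 + e) / (a + 1).
  by field; rewrite gt_eqF.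
have := divr_ge0 (mulr_ge0 (ltW e_gt0) (addr_ge0 ler01 (ltW e_gt0))) (ltW a1_gt0).
lra.
Qed.

Lemma exists_perm2 (T : finType) (j k j' k' : T) : j != k -> j' != k' ->
  exists s : {perm T}, s j' = j /\ s k' = k.
Proof.
move=> jk jk'; pose t := tperm j' j; pose m := t k'.
have mj : m != j.
  apply: contra jk' => /eqP mj; rewrite -(inj_eq (@perm_inj _ t)) -/m mj.
  by rewrite /t tpermL.
exists (t * tperm m k)%g; rewrite !permM /t tpermL -/t -/m tpermL.
by rewrite tpermD // eq_sym.
Qed.

Lemma indic_ge0 (T : Type) (R : numDomainType) (A : set T) (x : T) : 0 <= \1_A x :> R.
Proof. by rewrite indicE ler0n. Qed.

Lemma indic_le1 (T : Type) (R : numDomainType) (A : set T) (x : T) : \1_A x <= 1 :> R.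
Proof. by rewrite indicE lern1 leq_b1. Qed.

Lemma sum_ge_term (R : numDomainType) (I : finType) (F : I -> R) (j : I) :
  (forall i, 0 <= F i) -> F j <= \sum_i F i.
Proof. by move=> F_ge0; rewrite (bigD1 j) //= lerDl sumr_ge0. Qed.

Lemma sum_ge_pair (R : numDomainType) (I : finType) (F : I -> R) (j k : I) :
  j != k -> (forall i, 0 <= F i) -> F j + F k <= \sum_i F i.
Proof.
move=> jk F_ge0; rewrite (bigD1 j) //= (bigD1 k) 1?eq_sym //=.
by rewrite addrA lerDl sumr_ge0.
Qed.

Section PairMixture.
Variables (R : realFieldType) (I : finType) (lam mu : I -> R) (sg : I -> I).

Definition pair_mixture (g : I -> I -> R) : R :=
  \sum_j \sum_k lam j * mu k * g j k
  + (1 - \sum_k mu k) * \sum_j lam j * g j (sg j)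
  + (1 - \sum_j lam j) * \sum_k mu k * g (sg k) k.

Hypotheses (lam_ge0 : forall j, 0 <= lam j) (mu_ge0 : forall j, 0 <= mu j).
Hypotheses (lam_le1 : \sum_j lam j <= 1) (mu_le1 : \sum_j mu j <= 1).

Lemma sum_le_pair_mixture (p q : I -> R) (g : I -> I -> R) :
  (forall j, 0 <= p j) -> (forall k, 0 <= q k) -> (forall j k, p j + q k <= g j k) ->
  \sum_j (lam j * p j + mu j * q j) <= pair_mixture g.
Proof.
move=> p_ge0 q_ge0 pq_le_g.
(* Write [lam j * p j] as [lam j * p j * (Mu + (1 - Mu))], and symmetrically for [q]. *)
set La := \sum_j lam j; set Mu := \sum_k mu k.
have product_sum : \sum_j \sum_k lam j * mu k * (p j + q k)
    = (\sum_j lam j * p j) * Mu + (\sum_k mu k * q k) * La.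
  rewrite (eq_bigr (fun j => lam j * p j * Mu + \sum_k mu k * q k * lam j)); last first.
    by move=> j _; rewrite /Mu mulr_sumr -big_split /=; apply: eq_bigr => k _ /=; ring.
  rewrite big_split /= -mulr_suml; congr (_ + _).
  by rewrite exchange_big /= mulr_suml; apply: eq_bigr => k _; rewrite /La mulr_sumr.
have le_pairs : \sum_j \sum_k lam j * mu k * (p j + q k)
    <= \sum_j \sum_k lam j * mu k * g j k.
  by do 2![apply: ler_sum => ? _]; rewrite ler_wpM2l ?mulr_ge0.
have le_p : \sum_j lam j * p j <= \sum_j lam j * g j (sg j).
  apply: ler_sum => j _; rewrite ler_wpM2l //.
  by apply: le_trans (pq_le_g j (sg j)); rewrite lerDl.
have le_q : \sum_k mu k * q k <= \sum_k mu k * g (sg k) k.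
  apply: ler_sum => k _; rewrite ler_wpM2l //.
  by apply: le_trans (pq_le_g (sg k) k); rewrite lerDr.
have := ler_wpM2l (_ : 0 <= 1 - Mu) le_p; rewrite subr_ge0 => /(_ mu_le1).
have := ler_wpM2l (_ : 0 <= 1 - La) le_q; rewrite subr_ge0 => /(_ lam_le1).
rewrite /pair_mixture big_split /= -/La -/Mu; move: le_pairs; rewrite product_sum.
lra.
Qed.

Lemma pair_mixture_le (g : I -> I -> R) (s : R) :
  0 <= s -> (forall j k, g j k <= s) -> pair_mixture g <= s.
Proof.
move=> s_ge0 g_le.
set La := \sum_j lam j; set Mu := \sum_k mu k.
have le_pairs : \sum_j \sum_k lam j * mu k * g j k <= s * (La * Mu).
  rewrite /La /Mu mulr_suml mulr_sumr; apply: ler_sum => j _.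
  rewrite mulr_sumr mulr_sumr; apply: ler_sum => k _.
  by rewrite [leRHS]mulrC ler_wpM2l ?mulr_ge0.
have le_lam : \sum_j lam j * g j (sg j) <= s * La.
  by rewrite /La mulr_sumr; apply: ler_sum => j _; rewrite mulrC ler_wpM2r.
have le_mu : \sum_k mu k * g (sg k) k <= s * Mu.
  by rewrite /Mu mulr_sumr; apply: ler_sum => k _; rewrite mulrC ler_wpM2r.
have := ler_wpM2l (_ : 0 <= 1 - Mu) le_lam; rewrite subr_ge0 => /(_ mu_le1).
have := ler_wpM2l (_ : 0 <= 1 - La) le_mu; rewrite subr_ge0 => /(_ lam_le1).
(* The weights of [pair_mixture] add up to [1 - (1 - La) * (1 - Mu)]. *)
have : 0 <= s * ((1 - La) * (1 - Mu)) by rewrite !mulr_ge0 // subr_ge0.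
rewrite /pair_mixture -/La -/Mu; move: le_pairs; nra.
Qed.

End PairMixture.

Section Expectation.
Variables (d : measure_display) (T : measurableType d) (R : realType).
Variable P : probability T R.

Definition has_expectation (h : T -> R) (e : R) :=
  P.-integrable setT (EFin \o h) /\ (\int[P]_z (h z)%:E = e%:E)%E.

Lemma eq_has_expectation h h' e e' :
  h =1 h' -> e = e' -> has_expectation h e -> has_expectation h' e'.
Proof. by move=> /funext <- <-. Qed.

Lemma has_expectation_indic A : measurable A -> has_expectation \1_A (fine (P A)).
Proof.
move=> mA; split; first exact: integrable_indic.
by rewrite integral_indic // setIT fineK // fin_num_measure.
Qed.

Lemma has_expectationD h1 e1 h2 e2 : has_expectation h1 e1 -> has_expectation h2 e2 ->
  has_expectation (fun z => h1 z + h2 z) (e1 + e2).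
Proof.
rewrite /has_expectation => -[i1 E1] [i2 E2].
have -> : EFin \o (fun z => h1 z + h2 z) = (EFin \o h1) \+ (EFin \o h2) by [].
split; first exact: integrableD.
by rewrite (_ : (fun z => _) = (EFin \o h1) \+ (EFin \o h2)) // integralD_EFin // E1 E2.
Qed.

Lemma has_expectationZ c h e : has_expectation h e ->
  has_expectation (fun z => c * h z) (c * e).
Proof.
rewrite /has_expectation => -[i E].
have -> : EFin \o (fun z => c * h z) = (fun z => c%:E * (EFin \o h) z)%E by [].
split; first exact: integrableZl.
by rewrite (_ : (fun z => _) = (fun z => c%:E * (EFin \o h) z)%E) // integralZl // E.
Qed.

Lemma has_expectation_cst c : has_expectation (fun _ => c) c.
Proof.
apply: eq_has_expectation (has_expectationZ c (has_expectation_indic measurableT)).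
  by move=> z; rewrite indicT mulr1.
by rewrite probability_setT mulr1.
Qed.

Lemma has_expectation_sum (I : Type) (s : seq I) (F : I -> T -> R) (e : I -> R) :
  (forall i, has_expectation (F i) (e i)) ->
  has_expectation (fun z => \sum_(i <- s) F i z) (\sum_(i <- s) e i).
Proof.
move=> hF; elim: s => [|i s IHs].
  by apply: eq_has_expectation (has_expectation_cst 0) => [z|]; rewrite big_nil.
by apply: eq_has_expectation (has_expectationD (hF i) IHs) => [z|]; rewrite big_cons.
Qed.

Lemma le_has_expectation h1 e1 h2 e2 : has_expectation h1 e1 -> has_expectation h2 e2 ->
  (forall z, h1 z <= h2 z) -> e1 <= e2.
Proof.
move=> [i1 E1] [i2 E2] le12; rewrite -lee_fin -E1 -E2.
by apply: le_integral => // z _; rewrite lee_fin.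
Qed.

Lemma has_expectation_bounded (h : T -> R) (K : R) :
  measurable_fun setT h -> (forall z, 0 <= h z <= K) ->
  has_expectation h (fine (\int[P]_z (h z)%:E)%E).
Proof.
move=> mh hK.
have ih : P.-integrable setT (EFin \o h).
  apply: le_integrable (has_expectation_cst K).1 => //; first exact/measurable_EFinP.
  move=> z _ /=; have /andP[h0 hk] := hK z.
  by rewrite lee_fin !ger0_norm // (le_trans h0 hk).
by split; rewrite // fineK //; apply: integrable_fin_num.
Qed.

Lemma has_expectation_pair_mixture (I : finType) (lam mu : I -> R) (sg : I -> I)
    (g : I -> I -> T -> R) (e : I -> I -> R) :
  (forall j, lam j * mu j = 0) -> (forall j, sg j != j) ->
  (forall j k, j != k -> has_expectation (g j k) (e j k)) ->
  has_expectation (fun z => pair_mixture lam mu sg (fun j k => g j k z))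
                  (pair_mixture lam mu sg e).
Proof.
move=> lam_mu0 sg_neq hg.
have hpairs j k : has_expectation (fun z => lam j * mu k * g j k z) (lam j * mu k * e j k).
  have [<-|jk] := eqVneq j k; last exact/has_expectationZ/hg.
  by apply: eq_has_expectation (has_expectation_cst 0) => [z|]; rewrite lam_mu0 mul0r.
apply: has_expectationD; first apply: has_expectationD.
- by do 2!apply: has_expectation_sum => ?.
- apply/has_expectationZ/has_expectation_sum => j.
  by apply/has_expectationZ/hg; rewrite eq_sym.
- by apply/has_expectationZ/has_expectation_sum => k; apply/has_expectationZ/hg.
Qed.

End Expectation.

Section Exchangeable.
Variables (R : realType) (n : nat) (P : probability (n.-tuple R) R).

Definition coord_le (j : 'I_n) (x : R) : set (n.-tuple R) := [set z | tnth z j <= x].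

Lemma measurable_coord_le j x : measurable (coord_le j x).
Proof.
rewrite (_ : coord_le j x = (fun z : n.-tuple R => tnth z j) @^-1` `]-oo, x]).
  by rewrite -[X in measurable X]setTI; apply: measurable_tnth.
by apply/seteqP; split => z /=; rewrite in_itv.
Qed.

Lemma indic_coord_le j x z : \1_(coord_le j x) z = (tnth z j <= x)%R%:R :> R.
Proof.
rewrite indicE; case: (boolP (tnth z j <= x)) => hz; first by rewrite mem_set.
by rewrite memNset //; apply/negP.
Qed.

Definition permute_coords (s : 'S_n) (z : n.-tuple R) : n.-tuple R :=
  [tuple tnth z (s i) | i < n].

Lemma preimage_permute_coord_le s j x :
  permute_coords s @^-1` coord_le j x = coord_le (s j) x.
Proof. by apply/seteqP; split => z; rewrite /coord_le /permute_coords /= tnth_mktuple. Qed.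

Hypothesis Pinv : perm_invariant P.

Lemma perm_invariant_coord_le j j' x : P (coord_le j x) = P (coord_le j' x).
Proof.
rewrite -(tpermL j' j) -preimage_permute_coord_le.
exact: Pinv (measurable_coord_le _ _).
Qed.

Lemma perm_invariant_coord_le2 j k j' k' x y : j != k -> j' != k' ->
  P (coord_le j x `&` coord_le k y) = P (coord_le j' x `&` coord_le k' y).
Proof.
move=> jk jk'; have [s [<- <-]] := exists_perm2 jk jk'.
rewrite -!preimage_permute_coord_le -preimage_setI.
by apply: Pinv; apply: measurableI; apply: measurable_coord_le.
Qed.

Lemma cdfF_coord_le j x : cdfF P x = fine (P (coord_le j x)).
Proof.
have n_gt0 : (0 < n)%N by apply: leq_ltn_trans (ltn_ord j).
rewrite /cdfF (perm_invariant_coord_le j (Ordinal n_gt0)); congr (fine (P _)).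
by apply/seteqP; split => z; rewrite /coord_le /= (tnth_nth 0).
Qed.

Lemma cdfH_coord_le j k x y : j != k ->
  cdfH P x y = fine (P (coord_le j x `&` coord_le k y)).
Proof.
move=> jk; have n_gt1 : (1 < n)%N.
  by move: (ltn_ord j) (ltn_ord k) jk; rewrite -val_eqE /=; lia.
rewrite /cdfH (perm_invariant_coord_le2 x y jk
  (_ : Ordinal (ltnW n_gt1) != Ordinal n_gt1)) //.
by congr (fine (P _)); apply/seteqP; split => z; rewrite /coord_le /= !(tnth_nth 0).
Qed.

(* The makespan of the algorithm, for the draw [z], on the two tasks [j] and [k]
   with processing times [(1, 1/x)] and [(y, 1)]. *)
Definition pair_makespan (x y : R) (j k : 'I_n) (z : n.-tuple R) : R :=
  Num.max ((1 - \1_(coord_le j x) z) + y * (1 - \1_(coord_le k y) z))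
          (\1_(coord_le j x) z / x + \1_(coord_le k y) z).

Lemma pair_makespan_ge_min x y j k z : 0 < x -> 0 <= y ->
  Num.min 1 x^-1 <= pair_makespan x y j k z.
Proof.
move=> x_gt0 y_ge0; have xV_gt0 : 0 < x^-1 by rewrite invr_gt0.
rewrite /pair_makespan !indicE le_max !ge_min.
case: (_ \in coord_le j x); case: (_ \in coord_le k y); rewrite /= ?mulr1n ?mulr0n.
- by apply/orP; right; apply/orP; right; lra.
- by apply/orP; right; apply/orP; right; lra.
- by apply/orP; left; apply/orP; left; lra.
- by apply/orP; left; apply/orP; left; lra.
Qed.

Lemma pair_makespanE x y j k z : 0 < x -> 0 < y ->
  pair_makespan x y j k z = 1 + y - Num.min 1 (1 - x^-1 + y) * \1_(coord_le j x) z
    - y * \1_(coord_le k y) z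
    + Num.min (1 + x^-1) (1 + y) * \1_(coord_le j x `&` coord_le k y) z.
Proof.
move=> x_gt0 y_gt0; have xV_gt0 : 0 < x^-1 by rewrite invr_gt0.
rewrite indicI /= /pair_makespan !indicE.
case: (_ \in coord_le j x); case: (_ \in coord_le k y); rewrite /= ?mulr1n ?mulr0n.
- have [le_yxV|lt_xVy] := lerP y x^-1.
    rewrite (min_r (_ : 1 - x^-1 + y <= 1)) ?(min_r (_ : 1 + y <= 1 + x^-1)) ?max_r;
    lra.
  rewrite (min_l (_ : 1 <= 1 - x^-1 + y)) ?(min_l (_ : 1 + x^-1 <= 1 + y)) ?max_r;
  lra.
- have [le_yxV|lt_xVy] := lerP y x^-1.
    by rewrite (min_r (_ : 1 - x^-1 + y <= 1)) ?max_r; lra.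
  by rewrite (min_l (_ : 1 <= 1 - x^-1 + y)) ?max_l; lra.
- by rewrite max_l; lra.
- by rewrite max_l; lra.
Qed.

Lemma has_expectation_pair_makespan x y j k : 0 < x -> 0 < y -> j != k ->
  has_expectation P (pair_makespan x y j k) (phiP P x y).
Proof.
move=> x_gt0 y_gt0 jk.
have mj := measurable_coord_le j x; have mk := measurable_coord_le k y.
have := has_expectationD (has_expectationD (has_expectationD
  (has_expectation_cst P (1 + y))
  (has_expectationZ (- Num.min 1 (1 - x^-1 + y)) (has_expectation_indic P mj)))
  (has_expectationZ (- y) (has_expectation_indic P mk)))
  (has_expectationZ (Num.min (1 + x^-1) (1 + y))
    (has_expectation_indic P (measurableI _ _ mj mk))).
apply: eq_has_expectation => [z|]; first by rewrite /= pair_makespanE //; ring.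
by rewrite /phiP (cdfF_coord_le j) (cdfF_coord_le k) (cdfH_coord_le x y jk); ring.
Qed.

Lemma phiP_ge_min x y (j k : 'I_n) : 0 < x -> 0 < y -> j != k ->
  Num.min 1 x^-1 <= phiP P x y.
Proof.
move=> x_gt0 y_gt0 jk.
apply: le_has_expectation (has_expectation_cst P _)
  (has_expectation_pair_makespan x_gt0 y_gt0 jk) _.
by move=> z; apply: pair_makespan_ge_min => //; apply: ltW.
Qed.

Lemma phiP_ge0 x y (j k : 'I_n) : 0 < x -> 0 < y -> j != k -> 0 <= phiP P x y.
Proof.
move=> x_gt0 y_gt0 jk; apply: le_trans (phiP_ge_min x_gt0 y_gt0 jk).
by rewrite le_min ler01 invr_ge0 ltW.
Qed.

End Exchangeable.

Lemma m2_neq_m1 : m2 != m1. Proof. by []. Qed.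

Section Allocation.
Variables (R : realType) (n : nat) (T X : 'M[R]_(2, n)).
Hypotheses (Tpos : positive_matrix T) (Xalloc : is_alloc X).

Lemma alloc_ge0 i j : 0 <= X i j.
Proof. by case: (Xalloc.1 i j) => ->. Qed.

Lemma alloc_m2 j : X m2 j = 1 - X m1 j.
Proof. by rewrite -(Xalloc.2 j) addrC addKr. Qed.

Lemma alloc_m1_m2 j : X m1 j * X m2 j = 0.
Proof. by rewrite alloc_m2; case: (Xalloc.1 m1 j) => ->; rewrite ?mul0r ?subrr ?mulr0. Qed.

Lemma makespan_ge0 : 0 <= makespan X T.
Proof.
rewrite /makespan le_max sumr_ge0 // => j _.
by rewrite mulr_ge0 ?alloc_ge0 ?ltW.
Qed.

Lemma makespan_le_sum : makespan X T <= \sum_j (T m1 j + T m2 j).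
Proof.
have le_entry i j : X i j * T i j <= T i j.
  by case: (Xalloc.1 i j) => ->; rewrite ?mul0r ?mul1r // ltW.
rewrite /makespan ge_max; apply/andP; split; apply: ler_sum => j _.
  by rewrite (le_trans (le_entry _ _)) // lerDl ltW.
by rewrite (le_trans (le_entry _ _)) // lerDr ltW.
Qed.

Lemma makespan_ge_min j : Num.min (T m1 j) (T m2 j) <= makespan X T.
Proof.
have entry_ge0 i l : 0 <= X i l * T i l by rewrite mulr_ge0 ?alloc_ge0 ?ltW.
rewrite /makespan le_max !ge_min; case: (Xalloc.1 m1 j) => X1j.
  have X2j : X m2 j = 1 by rewrite alloc_m2 X1j subr0.
  by apply/orP; right; apply/orP; right; rewrite -[leLHS]mul1r -X2j sum_ge_term.
by apply/orP; left; apply/orP; left; rewrite -[leLHS]mul1r -X1j sum_ge_term.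
Qed.

Lemma makespan_gt0 : (0 < n)%N -> 0 < makespan X T.
Proof.
move=> n_gt0; apply: lt_le_trans (makespan_ge_min (Ordinal n_gt0)).
by rewrite lt_min !Tpos.
Qed.

Lemma makespan_ge_pair j k : j != k ->
  Num.max (X m1 j * T m1 j + X m1 k * T m1 k) (X m2 j * T m2 j + X m2 k * T m2 k)
  <= makespan X T.
Proof.
move=> jk; have entry_ge0 i l : 0 <= X i l * T i l by rewrite mulr_ge0 ?alloc_ge0 ?ltW.
rewrite /makespan ge_max !le_max !sum_ge_pair //.
by rewrite orbT.
Qed.

End Allocation.

Definition alloc_of (R : realType) (n : nat) (A : pred 'I_n) : 'M[R]_(2, n) :=
  \matrix_(i, j) if i == m1 then (A j)%:R else (~~ A j)%:R.

Lemma is_alloc_of (R : realType) (n : nat) (A : pred 'I_n) : is_alloc (alloc_of R A).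
Proof.
split=> [i j|j]; rewrite !mxE.
  by case: (i == m1); case: (A j); [right|left|left|right].
by rewrite eqxx (negbTE m2_neq_m1); case: (A j); rewrite /= ?add0r ?addr0.
Qed.

Section OptMakespan.
Variables (R : realType) (n : nat) (T : 'M[R]_(2, n)).
Hypothesis Tpos : positive_matrix T.

Lemma opt_makespan_le X : is_alloc X -> opt_makespan T <= makespan X T.
Proof.
move=> Xalloc; apply: ge_inf; last by exists X.
by exists 0 => _ [Y Yalloc <-]; apply: makespan_ge0.
Qed.

Lemma opt_makespan_ge c : (forall X, is_alloc X -> c <= makespan X T) ->
  c <= opt_makespan T.
Proof.
move=> c_le; apply: lb_le_inf; last by move=> _ [Y Yalloc <-]; apply: c_le.
by exists (makespan (alloc_of R predT) T), (alloc_of R predT) => //; apply: is_alloc_of.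
Qed.

Lemma opt_makespan_gt0 : (0 < n)%N -> 0 < opt_makespan T.
Proof.
move=> n_gt0; pose j := Ordinal n_gt0.
have min_gt0 : 0 < Num.min (T m1 j) (T m2 j) by rewrite lt_min !Tpos.
apply: lt_le_trans min_gt0 (opt_makespan_ge _) => X Xalloc.
exact: makespan_ge_min.
Qed.

End OptMakespan.

Section Algorithm.
Variables (R : realType) (n : nat) (T : 'M[R]_(2, n)).
Local Notation r j := (T m1 j / T m2 j).

Lemma alg_alloc_m1 z j : alg_alloc z T m1 j = 1 - \1_(coord_le j (r j)) z.
Proof.
by rewrite mxE eqxx indic_coord_le ltNge; case: (_ <= _); rewrite /= ?subr0 ?subrr.
Qed.

Lemma alg_alloc_m2 z j : alg_alloc z T m2 j = \1_(coord_le j (r j)) z.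
Proof.
by rewrite mxE (negbTE m2_neq_m1) indic_coord_le ltNge; case: (_ <= _).
Qed.

Lemma is_alloc_alg_alloc z : is_alloc (alg_alloc z T).
Proof.
split=> [i j|j]; last by rewrite alg_alloc_m1 alg_alloc_m2 subrK.
by rewrite mxE; case: (i == m1); case: (_ < _); [right|left|left|right].
Qed.

Definition alg_makespan (z : n.-tuple R) : R := makespan (alg_alloc z T) T.

Lemma alg_makespanE z : alg_makespan z =
  Num.max (\sum_j T m1 j * (1 - \1_(coord_le j (r j)) z))
          (\sum_j T m2 j * \1_(coord_le j (r j)) z).
Proof.
by rewrite /alg_makespan /makespan; congr Num.max; apply: eq_bigr => j _;
  rewrite (alg_alloc_m1, alg_alloc_m2) mulrC.
Qed.

Lemma measurable_alg_makespan : measurable_fun setT alg_makespan.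
Proof.
have mI j : measurable_fun setT (\1_(coord_le j (r j)) : n.-tuple R -> R).
  exact: measurable_indic (measurable_coord_le _ _).
rewrite (funext alg_makespanE); apply: measurable_maxr; apply: measurable_sum => j;
  apply: measurable_funM => //.
exact (measurable_funB (measurable_cst (1 : R)) (mI j)).
Qed.

Hypothesis Tpos : positive_matrix T.
Variable P : probability (n.-tuple R) R.

Lemma has_expectation_alg_makespan :
  has_expectation P alg_makespan (fine (exp_makespan P T)).
Proof.
apply: (has_expectation_bounded P (K := \sum_j (T m1 j + T m2 j)) measurable_alg_makespan).
move=> z.
have Xalloc := is_alloc_alg_alloc z.
by rewrite /alg_makespan (makespan_ge0 Tpos Xalloc) (makespan_le_sum Tpos Xalloc).
Qed.

Lemma exp_makespan_ratioE : (exp_makespan P T * ((opt_makespan T)^-1)%:E)%E =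
  (fine (exp_makespan P T) / opt_makespan T)%:E.
Proof.
have finE : exp_makespan P T = (fine (exp_makespan P T))%:E.
  exact: has_expectation_alg_makespan.2.
by rewrite {1}finE -EFinM.
Qed.

End Algorithm.

Section UpperBound.
Variables (R : realType) (n : nat) (T X : 'M[R]_(2, n)).
Hypotheses (n_gt0 : (0 < n)%N) (Tpos : positive_matrix T) (Xalloc : is_alloc X).
Local Notation M := (makespan X T).
Local Notation r j := (T m1 j / T m2 j).

Definition share_m1 j := X m1 j * T m1 j / M.
Definition share_m2 j := X m2 j * T m2 j / M.

Let M_gt0 : 0 < M := makespan_gt0 Tpos Xalloc n_gt0.

Lemma share_m1_ge0 j : 0 <= share_m1 j.
Proof. by rewrite /share_m1 !mulr_ge0 ?invr_ge0 ?(alloc_ge0 Xalloc) ?ltW ?Tpos. Qed.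

Lemma share_m2_ge0 j : 0 <= share_m2 j.
Proof. by rewrite /share_m2 !mulr_ge0 ?invr_ge0 ?(alloc_ge0 Xalloc) ?ltW ?Tpos. Qed.

Lemma sum_share_m1_le1 : \sum_j share_m1 j <= 1.
Proof. by rewrite /share_m1 -mulr_suml ler_pdivrMr // mul1r /makespan le_max lexx. Qed.

Lemma sum_share_m2_le1 : \sum_j share_m2 j <= 1.
Proof. by rewrite /share_m2 -mulr_suml ler_pdivrMr // mul1r /makespan le_max lexx orbT. Qed.

Lemma share_m1_m2 j : share_m1 j * share_m2 j = 0.
Proof.
rewrite /share_m1 /share_m2.
have -> : X m1 j * T m1 j / M * (X m2 j * T m2 j / M) =
  (X m1 j * X m2 j) * (T m1 j * T m2 j / M / M) by ring.
by rewrite (alloc_m1_m2 Xalloc) mul0r.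
Qed.

Variable sg : 'I_n -> 'I_n.

Lemma alg_makespan_le_mixture z : alg_makespan T z <=
  M * pair_mixture share_m1 share_m2 sg (fun j k => pair_makespan (r j) (r k) j k z).
Proof.
have M_neq0 : M != 0 by rewrite gt_eqF.
have a_neq0 j : T m1 j != 0 by rewrite gt_eqF ?Tpos.
have b_neq0 j : T m2 j != 0 by rewrite gt_eqF ?Tpos.
have r_gt0 j : 0 < r j by rewrite divr_gt0 ?Tpos.
have mixtureP := sum_le_pair_mixture sg share_m1_ge0 share_m2_ge0
  sum_share_m1_le1 sum_share_m2_le1.
(* Since [X m1 j + X m2 j = 1], [T m1 j = M * (share_m1 j + share_m2 j * r j)] and
   [T m2 j = M * (share_m1 j / r j + share_m2 j)]. *)
rewrite alg_makespanE ge_max; apply/andP; split.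
- rewrite (eq_bigr (fun j => M * (share_m1 j * (1 - \1_(coord_le j (r j)) z)
      + share_m2 j * (r j * (1 - \1_(coord_le j (r j)) z))))); last first.
    by move=> j _; rewrite /share_m1 /share_m2 (alloc_m2 Xalloc); field;
      rewrite ?M_neq0 ?b_neq0.
  rewrite -mulr_sumr; apply: ler_wpM2l; first exact: ltW.
  apply: mixtureP => [j|k|j k].
  + by rewrite subr_ge0 indic_le1.
  + by rewrite mulr_ge0 ?subr_ge0 ?indic_le1 ?ltW.
  + by rewrite /pair_makespan le_max lexx.
- rewrite (eq_bigr (fun j => M * (share_m1 j * (\1_(coord_le j (r j)) z / r j)
      + share_m2 j * \1_(coord_le j (r j)) z))); last first.
    by move=> j _; rewrite /share_m1 /share_m2 (alloc_m2 Xalloc); field;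
      rewrite ?M_neq0 ?a_neq0 ?b_neq0.
  rewrite -mulr_sumr; apply: ler_wpM2l; first exact: ltW.
  apply: mixtureP => [j|k|j k].
  + by rewrite divr_ge0 ?indic_ge0 ?ltW.
  + exact: indic_ge0.
  + by rewrite /pair_makespan le_max lexx orbT.
Qed.

Variable P : probability (n.-tuple R) R.
Hypotheses (Pinv : perm_invariant P) (sg_neq : forall j, sg j != j).

Lemma exp_makespan_le s : 0 <= s -> (forall x y, 0 < x -> 0 < y -> phiP P x y <= s) ->
  fine (exp_makespan P T) <= s * M.
Proof.
move=> s_ge0 phi_le.
have r_gt0 j : 0 < r j by rewrite divr_gt0 ?Tpos.
have mixture_exp := has_expectation_pair_mixture share_m1_m2 sg_neq
  (fun j k jk => has_expectation_pair_makespan Pinv (r_gt0 j) (r_gt0 k) jk).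
have := le_has_expectation (has_expectation_alg_makespan Tpos P)
  (has_expectationZ M mixture_exp) alg_makespan_le_mixture.
move/le_trans; apply; rewrite [leLHS]mulrC; apply: ler_wpM2r; first exact: ltW.
apply: (pair_mixture_le sg share_m1_ge0 share_m2_ge0 sum_share_m1_le1 sum_share_m2_le1).
  exact: s_ge0.
by move=> j k; apply: phi_le.
Qed.

End UpperBound.

Section LowerBound.
Variables (R : realType) (n : nat) (P : probability (n.-tuple R) R) (j k : 'I_n).
Hypotheses (Pinv : perm_invariant P) (jk : j != k).
Variables (x y e : R).
Hypotheses (x_gt0 : 0 < x) (y_gt0 : 0 < y) (e_gt0 : 0 < e).

Definition padded_instance : 'M[R]_(2, n) := \matrix_(i, l)
  if l == j then (if i == m1 then 1 else x^-1)
  else if l == k then (if i == m1 then y else 1) else e.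

Lemma padded_instance_pos : positive_matrix padded_instance.
Proof.
move=> i l; rewrite mxE.
by case: (l == j); case: (i == m1); case: (l == k); rewrite ?invr_gt0.
Qed.

Lemma phiP_le_exp_makespan_padded : phiP P x y <= fine (exp_makespan P padded_instance).
Proof.
apply: (le_has_expectation (has_expectation_pair_makespan Pinv x_gt0 y_gt0 jk)
  (has_expectation_alg_makespan padded_instance_pos P)) => z.
have kj : (k == j) = false by rewrite eq_sym (negbTE jk).
have rj : padded_instance m1 j / padded_instance m2 j = x.
  by rewrite !mxE !eqxx (negbTE m2_neq_m1) /= div1r invrK.
have rk : padded_instance m1 k / padded_instance m2 k = y.
  by rewrite !mxE kj !eqxx (negbTE m2_neq_m1) /= divr1.
rewrite /alg_makespan.
apply: le_trans _ (makespan_ge_pair padded_instance_pos (is_alloc_alg_alloc _ z) jk).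
rewrite !alg_alloc_m1 !alg_alloc_m2 rj rk !mxE kj !eqxx (negbTE m2_neq_m1) /=.
by rewrite /pair_makespan le_eqVlt; apply/orP; left; apply/eqP; congr Num.max; ring.
Qed.

Lemma opt_makespan_padded_le : opt_makespan padded_instance <= 1 + e * n%:R.
Proof.
have e_ge0 := ltW e_gt0.
apply: le_trans (opt_makespan_le padded_instance_pos (is_alloc_of R (pred1 j))) _.
rewrite /makespan ge_max; apply/andP; split.
  rewrite (bigD1 j) //= big1 => [|l /negbTE lj]; last by rewrite !mxE /= lj mulr0n mul0r.
  by rewrite !mxE /= !eqxx /= mulr1n mulr1 addr0 lerDl mulr_ge0 ?ler0n.
apply: (@le_trans _ _ (\sum_(l < n) ((l == k)%:R + e))).
  apply: ler_sum => l _; rewrite !mxE (negbTE m2_neq_m1) /=.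
  have [->|lj] := eqVneq l j; first by rewrite /= mulr0n mul0r addr_ge0 ?ler0n.
  rewrite /= mulr1n mul1r; case: (l == k) => /=; first by rewrite lerDl.
  by rewrite mulr0n add0r.
rewrite big_split /= sumr_const card_ord -[e *+ n]mulr_natr lerD2r.
rewrite (bigD1 k) //= eqxx big1.
  by rewrite addr0 mulr1n.
by move=> l /negbTE -> /=; rewrite mulr0n.
Qed.

Lemma padded_ratio_ge : ((phiP P x y / (1 + e * n%:R))%:E <=
  exp_makespan P padded_instance * ((opt_makespan padded_instance)^-1)%:E)%E.
Proof.
have n_gt0 : (0 < n)%N by apply: leq_ltn_trans (ltn_ord j).
have opt_gt0 := opt_makespan_gt0 padded_instance_pos n_gt0.
have den_gt0 : 0 < 1 + e * n%:R by rewrite addr_gt0 ?mulr_gt0 ?ltr0n.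
have phi_ge0 := phiP_ge0 Pinv x_gt0 y_gt0 jk.
rewrite (exp_makespan_ratioE padded_instance_pos) lee_fin.
apply: (@le_trans _ _ (phiP P x y / opt_makespan padded_instance)).
  by rewrite ler_wpM2l // lef_pV2 ?posrE ?opt_makespan_padded_le.
by apply: ler_wpM2r; [rewrite invr_ge0 ltW | exact: phiP_le_exp_makespan_padded].
Qed.

End LowerBound.

Section ApproxRatio.
Variables (R : realType) (n : nat) (P : probability (n.-tuple R) R).
Hypotheses (n_ge2 : (2 <= n)%N) (Pinv : perm_invariant P).

Let j0 : 'I_n := Ordinal (ltnW n_ge2).
Let j1 : 'I_n := Ordinal n_ge2.
Let j0_neq_j1 : j0 != j1. Proof. by []. Qed.
Let other (j : 'I_n) : 'I_n := if j == j0 then j1 else j0.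
Let other_neq j : other j != j.
Proof. by rewrite /other; case: (eqVneq j j0) => [->|]; rewrite eq_sym. Qed.

Lemma instance_ratio_le T s : positive_matrix T ->
  (forall x y, 0 < x -> 0 < y -> phiP P x y <= s) ->
  (exp_makespan P T * ((opt_makespan T)^-1)%:E <= s%:E)%E.
Proof.
move=> Tpos phi_le.
have n_gt0 : (0 < n)%N := ltnW n_ge2.
have s_gt0 : 0 < s.
  have := le_trans (phiP_ge_min Pinv ltr01 ltr01 j0_neq_j1) (phi_le 1 1 ltr01 ltr01).
  by apply: lt_le_trans; rewrite invr1 lt_min ltr01.
have opt_gt0 := opt_makespan_gt0 Tpos n_gt0.
rewrite exp_makespan_ratioE // lee_fin ler_pdivrMr // -ler_pdivrMl //.
apply: opt_makespan_ge => X Xalloc; rewrite ler_pdivrMl //.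
exact: (exp_makespan_le n_gt0 Tpos Xalloc Pinv other_neq (ltW s_gt0) phi_le).
Qed.

Lemma exists_instance_ratio_ge x y e : 0 < x -> 0 < y -> 0 < e ->
  exists2 T, positive_matrix T &
    ((phiP P x y - e)%:E <= exp_makespan P T * ((opt_makespan T)^-1)%:E)%E.
Proof.
move=> x_gt0 y_gt0 e_gt0; set phi := phiP P x y.
have phi_ge0 : 0 <= phi := phiP_ge0 Pinv x_gt0 y_gt0 j0_neq_j1.
pose d := e / (phi + 1).
have d_gt0 : 0 < d by rewrite divr_gt0 // ltr_wpDl.
have pad_gt0 : 0 < d / n%:R by rewrite divr_gt0 // ltr0n (ltnW n_ge2).
exists (padded_instance j0 j1 x y (d / n%:R)); first exact: padded_instance_pos.
apply: le_trans (padded_ratio_ge Pinv j0_neq_j1 x_gt0 y_gt0 pad_gt0); rewrite lee_fin.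
rewrite divfK ?pnatr_eq0 -?lt0n ?(ltnW n_ge2) //.
exact: subr_le_div_1D.
Qed.

End ApproxRatio.

Theorem theorem5 (R : realType) (n : nat) (hn : (2 <= n)%N)
  (P : probability (n.-tuple R) R) :
  supported_pos P -> perm_invariant P ->
  approx_ratio P = ereal_sup [set r : \bar R | exists x y : R,
                                 [/\ 0 < x, 0 < y & r = (phiP P x y)%:E]].
Proof.
move=> _ Pinv; apply/eqP; rewrite eq_le; apply/andP; split.
- apply/ereal_supP => _ [T Tpos <-].
  apply: (@le_ereal_sup_real_ubound _ _ _ (phiP P 1 1)).
    by exists 1, 1; split; rewrite ?ltr01.
  move=> s s_ub; apply: instance_ratio_le => // x y x_gt0 y_gt0.
  by rewrite -lee_fin; apply: s_ub; exists x, y.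
- apply/ereal_supP => _ [x [y [x_gt0 y_gt0 ->]]]; apply/lee_subgt0Pr => e e_gt0.
  have [T Tpos le_ratio] := exists_instance_ratio_ge hn Pinv x_gt0 y_gt0 e_gt0.
  by apply: le_trans le_ratio _; apply: ereal_sup_ubound; exists T.
Qed.
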